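(* Let $n\geq 1$ and $d\geq 1$ be integers, and let $p(x)=p(x_1,\ldots,x_n)$ be any form (homogeneous polynomial) of degree $2d$ with real coefficients. Then there exists $\lambda\in\mathbb{R}$ such that the form $p(x)-\lambda\left(\sum_{i=1}^n x_i^2\right)^d$ is dsos.
   Context: Let $z(x,d)$ denote the vector of all monomials of degree exactly $d$ in the variables $x=(x_1,\ldots,x_n)$ (of length $\binom{n+d-1}{d}$). A real symmetric matrix $Q=(q_{ij})$ is diagonally dominant (dd) if $q_{ii}\geq \sum_{j\neq i}|q_{ij}|$ for all $i$. A form $f$ of degree $2d$ in $n$ variables is called diagonally-dominant-sum-of-squares (dsos) if there exists a diagonally dominant symmetric matrix $Q$ such that $f(x)=z(x,d)^T Q\, z(x,d)$ identically. *)

From mathcomp Require Import all_boot all_order all_algebra.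
From mathcomp Require Import mpoly.
Set Implicit Arguments. Unset Strict Implicit. Unset Printing Implicit Defensive.
Import Order.TTheory GRing.Theory Num.Theory.
Local Open Scope ring_scope.

(* Index type of the vector z(x,d): monomials (exponent vectors) in n
   variables of total degree exactly d (a finite type). *)
Definition dmon (n d : nat) : finType := {m : 'X_{1..n < d.+1} | mdeg m == d}.

Definition zmon (R : realFieldType) (n d : nat) (m : dmon n d) : {mpoly R[n]} :=
  'X_[val (val m)].

Definition symmetric_mx (R : realFieldType) (T : finType) (Q : T -> T -> R) :=
  forall i j, Q i j = Q j i.

Definition diag_dominant (R : realFieldType) (T : finType) (Q : T -> T -> R) :=
  forall i, \sum_(j | j != i) `|Q i j| <= Q i i.

Definition dsos (R : realFieldType) (n d : nat) (f : {mpoly R[n]}) :=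
  exists Q : dmon n d -> dmon n d -> R,
    [/\ symmetric_mx Q, diag_dominant Q &
        f = \sum_(i : dmon n d) \sum_(j : dmon n d) Q i j *: (zmon R i * zmon R j)].

(* Every form p of degree 2d has a symmetric Gram matrix P, i.e. p = z^T P z
   with z = z(x,d): split each monomial of degree 2d as a sum of two monomials
   of degree d and spread its coefficient evenly over all such splittings.
   Expanding (x_1^2 + ... + x_n^2)^d shows that it equals z^T D z for a
   diagonal D with all diagonal entries at least 1. Hence for K = sum |P_ij|
   the matrix P + K D is diagonally dominant, and p + K (sum x_i^2)^d is dsos. *)

From mathcomp Require Import all_boot all_order all_algebra.
From mathcomp Require Import mpoly.
From mathcomp Require Import lra.
Import Order.TTheory GRing.Theory Num.Theory.
Set Implicit Arguments. Unset Strict Implicit. Unset Printing Implicit Defensive.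
Local Open Scope ring_scope.

Lemma mdeg_sum_seq n (s : seq 'I_n) : mdeg (\sum_(i <- s) U_(i))%MM = size s.
Proof. by rewrite mdeg_sum; under eq_bigr do rewrite mdeg1; rewrite sum1_size. Qed.

Lemma mnm_sum_seq n (m : 'X_{1..n}) : exists s : seq 'I_n, m = (\sum_(i <- s) U_(i))%MM.
Proof.
elim: {m}(mdeg m) {-2}m (erefl (mdeg m)) => [|k IH] m dm.
  by exists [::]; rewrite big_nil; apply/eqP; rewrite -mdeg_eq0 dm.
have [i m_i|m0] := pickP (fun i => 0 < m i)%N; last first.
  by move: dm; rewrite mdegE big1 // => j _; move: (m0 j); case: (m j).
have Ui_le_m : (U_(i) <= m)%MM.
  by apply/mnm_lepP => j; rewrite mnm1E; case: eqP => [<-|].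
have [|s hs] := IH (m - U_(i))%MM.
  by apply: succn_inj; rewrite -dm -addn1 -(mdeg1 i) -mdegD submK.
by exists (i :: s); rewrite big_cons -hs addmC submK.
Qed.

Lemma mnm_split_mdeg n (m : 'X_{1..n}) k : (k <= mdeg m)%N ->
  exists u v, [/\ mdeg u = k, mdeg v = (mdeg m - k)%N & m = (u + v)%MM].
Proof.
have [s ->] := mnm_sum_seq m; rewrite mdeg_sum_seq => k_le.
exists (\sum_(i <- take k s) U_(i))%MM, (\sum_(i <- drop k s) U_(i))%MM.
by rewrite !mdeg_sum_seq size_takel // size_drop -big_cat cat_take_drop.
Qed.

Definition diagm (R : nmodType) (T : eqType) (c : T -> R) (i j : T) : R :=
  if i == j then c i else 0.

Section DiagonalShift.

Variables (R : realFieldType) (T : finType) (P : T -> T -> R) (c : T -> R) (K : R).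

Lemma symmetric_mx_add_diag : symmetric_mx P -> symmetric_mx (fun i j => P i j + K * diagm c i j).
Proof. by move=> P_sym i j; rewrite P_sym /diagm eq_sym; case: eqP => [->|]. Qed.

Lemma diag_dominant_add_diag : \sum_i \sum_j `|P i j| <= K -> (forall i, 1 <= c i) ->
  diag_dominant (fun i j => P i j + K * diagm c i j).
Proof.
move=> K_ge c_ge1 i.
have offdiag : \sum_(j | j != i) `|P i j + K * diagm c i j| = \sum_(j | j != i) `|P i j|.
  by apply: eq_bigr => j ji; rewrite /diagm eq_sym (negbTE ji) mulr0 addr0.
have row_le : \sum_j `|P i j| <= K.
  apply: le_trans K_ge; rewrite [leRHS](bigD1 i) //= lerDl.
  by apply: sumr_ge0 => k _; apply: sumr_ge0.
have K_ge0 : 0 <= K by apply: le_trans K_ge; apply: sumr_ge0 => k _; apply: sumr_ge0.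
have K_le : K <= K * c i by rewrite ler_peMr.
move: row_le; rewrite (bigD1 i) //=.
have := ler_norm (- P i i); rewrite normrN offdiag /diagm eqxx; lra.
Qed.

End DiagonalShift.

Section DegreeMonomials.

Variables n d : nat.

Definition dmon_mnm (a : dmon n d) : 'X_{1..n} := val (val a).

Lemma mdeg_dmon (a : dmon n d) : mdeg (dmon_mnm a) = d.
Proof. exact: eqP (valP a). Qed.

Lemma dmon_mnm_onto (u : 'X_{1..n}) : mdeg u = d -> exists a, dmon_mnm a = u.
Proof.
move=> du; have u_lt : (mdeg u < d.+1)%N by rewrite du.
have u_deg : mdeg (BMultinom u_lt) == d by rewrite /= du.
by exists (exist _ (BMultinom u_lt) u_deg).
Qed.

End DegreeMonomials.

Section GramForm.

Variables (R : realFieldType) (n d : nat).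

Definition gram_form (Q : dmon n d -> dmon n d -> R) : {mpoly R[n]} :=
  \sum_i \sum_j Q i j *: (zmon R i * zmon R j).

Lemma mcoeff_gram_form Q m : (gram_form Q)@_m =
  \sum_i \sum_j Q i j * ((dmon_mnm i + dmon_mnm j)%MM == m)%:R.
Proof.
rewrite raddf_sum; apply: eq_bigr => i _; rewrite raddf_sum; apply: eq_bigr => j _.
by rewrite /= mcoeffZ /zmon -mpolyXD mcoeffX.
Qed.

Lemma gram_formD Q1 Q2 :
  gram_form (fun i j => Q1 i j + Q2 i j) = gram_form Q1 + gram_form Q2.
Proof.
rewrite -big_split; apply: eq_bigr => i _; rewrite -big_split.
by apply: eq_bigr => j _; rewrite scalerDl.
Qed.

Lemma gram_formZ k Q : gram_form (fun i j => k * Q i j) = k *: gram_form Q.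
Proof.
rewrite scaler_sumr; apply: eq_bigr => i _; rewrite scaler_sumr.
by apply: eq_bigr => j _; rewrite scalerA.
Qed.

Lemma gram_form_diag c :
  gram_form (diagm c) = \sum_a c a *: 'X_[dmon_mnm a + dmon_mnm a].
Proof.
apply: eq_bigr => i _; rewrite (bigD1 i) //= big1 ?addr0 => [|j /negbTE ji].
  by rewrite /diagm eqxx /zmon -mpolyXD.
by rewrite /diagm eq_sym ji scale0r.
Qed.

End GramForm.

Section GramMatrix.

Variables (R : realFieldType) (n d : nat).

Definition mnm_pairs (m : 'X_{1..n}) :=
  [pred ab : dmon n d * dmon n d | (dmon_mnm ab.1 + dmon_mnm ab.2)%MM == m].

Definition gram_mx (p : {mpoly R[n]}) (a b : dmon n d) : R :=
  let m := (dmon_mnm a + dmon_mnm b)%MM in p@_m / #|mnm_pairs m|%:R.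

Lemma gram_mx_sym p : symmetric_mx (gram_mx p).
Proof. by move=> a b; rewrite /gram_mx addmC. Qed.

Lemma card_mnm_pairs_gt0 (m : 'X_{1..n}) : mdeg m = (2 * d)%N -> (0 < #|mnm_pairs m|)%N.
Proof.
move=> dm; have [|u [v [du dv ->]]] := mnm_split_mdeg (m := m) (k := d).
  by rewrite dm leq_pmull.
have [a <-] := dmon_mnm_onto du.
have [|b <-] := @dmon_mnm_onto n d v.
  by rewrite dv dm mul2n -addnn addnK.
by apply/card_gt0P; exists (a, b); rewrite inE.
Qed.

Lemma gram_form_gram_mx p : p \is (2 * d)%N.-homog -> gram_form (gram_mx p) = p.
Proof.
move=> p_homog; apply/mpolyP => m; rewrite mcoeff_gram_form pair_bigA /=.
transitivity (\sum_(ab in mnm_pairs m) p@_m / #|mnm_pairs m|%:R).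
  rewrite [RHS]big_mkcond; apply: eq_bigr => -[a b] _ /=.
  by rewrite inE /=; case: eqP => [<-|_]; rewrite ?mulr1 ?mulr0.
have [->|pm_neq0] := eqVneq p@_m 0; first by rewrite mul0r sumr_const mul0rn.
rewrite sumr_const -[LHS]mulr_natr divfK // pnatr_eq0 -lt0n card_mnm_pairs_gt0 //.
by apply: (dhomog_mf p_homog); rewrite mcoeff_msupp.
Qed.

End GramMatrix.

Section SquaredNormPower.

Variables (R : realFieldType) (n : nat).

Definition ffun_mnm k (f : {ffun 'I_k -> 'I_n}) : 'X_{1..n} := (\sum_(j < k) U_(f j))%MM.

Lemma mdeg_ffun_mnm k (f : {ffun 'I_k -> 'I_n}) : mdeg (ffun_mnm f) = k.
Proof.
by rewrite mdeg_sum; under eq_bigr do rewrite mdeg1; rewrite sum1_card card_ord.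
Qed.

Lemma sqr_norm_expE k : (\sum_(i < n) 'X_i ^+ 2 : {mpoly R[n]}) ^+ k =
  \sum_(f : {ffun 'I_k -> 'I_n}) 'X_[ffun_mnm f + ffun_mnm f].
Proof.
rewrite -{1}(card_ord k) -prodr_const bigA_distr_bigA; apply: eq_bigr => f _.
rewrite /ffun_mnm -big_split (big_morph _ (@mpolyXD n R) (@mpolyX0 n R)).
by apply: eq_bigr => j _; rewrite mpolyXD expr2.
Qed.

Variable d : nat.

Definition ffun_dmon (f : {ffun 'I_d -> 'I_n}) : dmon n d :=
  Sub (BMultinom (eq_leq (congr1 succn (mdeg_ffun_mnm f)))) (introT eqP (mdeg_ffun_mnm f)).

Lemma ffun_dmon_onto : (0 < n)%N -> forall a : dmon n d, exists f, ffun_dmon f = a.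
Proof.
move=> n_gt0 a; have [s s_a] := mnm_sum_seq (dmon_mnm a).
have size_s : size s = d by rewrite -(mdeg_dmon a) s_a mdeg_sum_seq.
exists [ffun j : 'I_d => nth (Ordinal n_gt0) s j]; apply/val_inj/val_inj => /=.
rewrite [RHS]s_a (big_nth (Ordinal n_gt0)) size_s big_mkord.
by apply: eq_bigr => j _; rewrite ffunE.
Qed.

Definition sqr_norm_gram (a : dmon n d) : R := #|[pred f | ffun_dmon f == a]|%:R.

Lemma sqr_norm_exp_gram :
  (\sum_(i < n) 'X_i ^+ 2 : {mpoly R[n]}) ^+ d = gram_form (diagm sqr_norm_gram).
Proof.
rewrite gram_form_diag sqr_norm_expE (partition_big ffun_dmon xpredT) //=.
apply: eq_bigr => a _; rewrite scaler_nat -sumr_const.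
by apply: eq_big => [f|f /eqP <-] //; rewrite inE.
Qed.

Lemma sqr_norm_gram_ge1 : (0 < n)%N -> forall a, 1 <= sqr_norm_gram a.
Proof.
move=> n_gt0 a; rewrite ler1n; apply/card_gt0P.
by have [f fa] := ffun_dmon_onto n_gt0 a; exists f; rewrite inE fa.
Qed.

End SquaredNormPower.

Theorem theorem3 (R : realFieldType) (n d : nat) (hn : (1 <= n)%N) (hd : (1 <= d)%N)
    (p : {mpoly R[n]}) (hp : p \is (2 * d)%N.-homog) :
  exists lambda : R,
    dsos d (p - lambda *: (\sum_(i < n) 'X_i ^+ 2) ^+ d).
Proof.
pose P := gram_mx (d := d) p; pose K := \sum_i \sum_j `|P i j|.
exists (- K), (fun i j => P i j + K * diagm (@sqr_norm_gram R n d) i j); split.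
- exact/symmetric_mx_add_diag/gram_mx_sym.
- by apply: diag_dominant_add_diag => //; apply: sqr_norm_gram_ge1.
- rewrite -[RHS]/(gram_form _).
  by rewrite gram_formD gram_formZ -sqr_norm_exp_gram gram_form_gram_mx // scaleNr opprK.
Qed.
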